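(* Let $(S,+)$ be an infinite semigroup with no idempotent element which is left weakly cancellative and right cancellative, and let $\langle x_n\rangle_{n=1}^\infty$ be a sequence in $S$. Then there exists a sum subsystem $\langle y_n\rangle_{n=1}^\infty$ of $\langle x_n\rangle_{n=1}^\infty$ which satisfies uniqueness of finite sums.
   Context: $S$ is left weakly cancellative if for all $a,b\in S$ the set $\{x: a+x=b\}$ is finite; $S$ is right cancellative if for all $a,b$ the set $\{x: x+a=b\}$ has at most one element; $e$ is idempotent if $e+e=e$. $\mathcal{P}_f(\mathbb{N})$ is the set of nonempty finite subsets of $\mathbb{N}=\{1,2,\dots\}$, and $\sum_{n\in H}x_n$ denotes the sum in increasing order of indices. A sequence $\langle y_n\rangle_{n=1}^\infty$ is a sum subsystem of $\langle x_n\rangle_{n=1}^\infty$ if there are $H_n\in\mathcal{P}_f(\mathbb{N})$ with $\max H_n<\min H_{n+1}$ and $y_n=\sum_{t\in H_n}x_t$ for all $n$. A sequence $\langle y_n\rangle_{n=1}^\infty$ satisfies uniqueness of finite sums if for all distinct $H_1,H_2\in\mathcal{P}_f(\mathbb{N})$, $\sum_{n\in H_1}y_n\neq\sum_{n\in H_2}y_n$. *)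

(* Sequences indexed by nat (index 0 plays the role of 1). *)
From Stdlib Require Import List Arith Sorted.
Import ListNotations.

Definition associative {T : Type} (op : T -> T -> T) : Prop :=
  forall a b c, op a (op b c) = op (op a b) c.

Definition infinite_type (T : Type) : Prop :=
  ~ exists l : list T, forall x : T, In x l.

Definition no_idempotent {T : Type} (op : T -> T -> T) : Prop :=
  forall e : T, op e e <> e.

Definition left_weakly_cancellative {T : Type} (op : T -> T -> T) : Prop :=
  forall a b : T, exists l : list T, forall x, op a x = b -> In x l.

Definition right_cancellative {T : Type} (op : T -> T -> T) : Prop :=
  forall a b x y : T, op x a = b -> op y a = b -> x = y.

(* Nonempty finite subsets of nat, represented canonically as nonempty
   strictly increasing lists (so distinct sets = distinct lists). *)
Definition fin_index_set (H : list nat) : Prop :=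
  H <> [] /\ StronglySorted lt H.

Definition fsum {T : Type} (op : T -> T -> T) (x : nat -> T) (H : list nat) : option T :=
  match H with
  | [] => None
  | h :: t => Some (fold_left (fun acc n => op acc (x n)) t (x h))
  end.

Definition sum_subsystem {T : Type} (op : T -> T -> T) (x y : nat -> T) : Prop :=
  exists Hs : nat -> list nat,
    (forall n, fin_index_set (Hs n)) /\
    (forall n, last (Hs n) 0 < hd 0 (Hs (S n))) /\
    (forall n, fsum op x (Hs n) = Some (y n)).

Definition uniqueness_of_finite_sums {T : Type} (op : T -> T -> T) (y : nat -> T) : Prop :=
  forall H1 H2, fin_index_set H1 -> fin_index_set H2 -> H1 <> H2 ->
    fsum op y H1 <> fsum op y H2.

From Stdlib Require Import List Arith Sorted Lia Classical ClassicalEpsilon FinFun.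
Import ListNotations.

(* Right cancellation and the absence of idempotents forbid [a + z = z].
   Left weak cancellation then forbids [z + w = z] as well: otherwise
   [z + n w = z] for every [n], so two multiples [i w], [j w] with [i < j]
   coincide, i.e. [(j - i) w + i w = i w].  Hence the partial sums
   [x_k + ... + x_(k+n)] are pairwise distinct in [n], and the block [y_m]
   can be chosen as such a partial sum avoiding the finitely many [b] and
   solutions [z] of [a + z = b], for [a], [b] finite sums of [y_0 .. y_(m-1)].
   Two index sets with equal sums then have the same largest index [e]
   (otherwise [y_e] would be forbidden), and cancelling [y_e] on the right
   concludes by induction. *)

Lemma lt_neq_injective {A : Type} (f : nat -> A) :
  (forall i j, i < j -> f i <> f j) -> Injective f.
Proof.
  intros Hf i j E.
  destruct (lt_eq_lt_dec i j) as [[Hij|Hij]|Hij]; auto.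
  - exfalso; exact (Hf i j Hij E).
  - exfalso; exact (Hf j i Hij (eq_sym E)).
Qed.

Lemma injective_escapes_list {A : Type} (f : nat -> A) :
  Injective f -> forall L : list A, exists n, ~ In (f n) L.
Proof.
  intros Hf L. apply not_all_not_ex. intros Hall.
  assert (Hincl : incl (map f (seq 0 (S (length L)))) L).
  { intros a Ha. apply in_map_iff in Ha as [n [<- _]]. apply NNPP, Hall. }
  apply NoDup_incl_length in Hincl.
  - rewrite length_map, length_seq in Hincl. lia.
  - apply Injective_map_NoDup; [exact Hf | apply seq_NoDup].
Qed.

Lemma StronglySorted_snoc_inv {A : Type} (R : A -> A -> Prop) l e :
  StronglySorted R (l ++ [e]) -> StronglySorted R l /\ Forall (fun t => R t e) l.
Proof.
  induction l as [|a l IH]; simpl; intros Hs.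
  - split; constructor.
  - apply StronglySorted_inv in Hs as [Hs Ha].
    apply Forall_app in Ha as [Ha Hae].
    destruct (IH Hs) as [Hl Hle].
    split; constructor; auto.
    exact (Forall_inv Hae).
Qed.

Lemma StronglySorted_lt_seq k n : StronglySorted lt (seq k n).
Proof.
  revert k; induction n as [|n IH]; intros k; simpl; constructor; auto.
  apply Forall_forall; intros t Ht; apply in_seq in Ht; lia.
Qed.

Lemma fsum_snoc {T : Type} (op : T -> T -> T) (x : nat -> T) l e :
  fsum op x (l ++ [e]) =
  Some (match fsum op x l with None => x e | Some a => op a (x e) end).
Proof. destruct l; simpl; [reflexivity|]. now rewrite fold_left_app. Qed.

Lemma fsum_None {T : Type} (op : T -> T -> T) (x : nat -> T) l :
  fsum op x l = None -> l = [].
Proof. destruct l; [reflexivity | discriminate]. Qed.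

Section Semigroup.

Variable T : Type.
Variable op : T -> T -> T.
Hypothesis Hassoc : associative op.
Hypothesis Hnoid : no_idempotent op.
Hypothesis Hrc : right_cancellative op.

Lemma left_translation_fixpoint_free a z : op a z <> z.
Proof.
  intros E. apply (Hnoid a), (Hrc z z (op a a) a); [|exact E].
  now rewrite <- Hassoc, !E.
Qed.

Lemma fsum_snoc_cancel (x : nat -> T) l1 l2 e :
  fsum op x (l1 ++ [e]) = fsum op x (l2 ++ [e]) -> fsum op x l1 = fsum op x l2.
Proof.
  rewrite !fsum_snoc. intros E. injection E as E.
  destruct (fsum op x l1) as [a1|], (fsum op x l2) as [a2|]; try reflexivity.
  - f_equal. exact (Hrc _ _ _ _ E eq_refl).
  - exfalso. exact (left_translation_fixpoint_free _ _ E).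
  - exfalso. exact (left_translation_fixpoint_free _ _ (eq_sym E)).
Qed.

(* [npow w n] is the [(n + 1)]-fold sum [w + ... + w]: there is no neutral
   element to start from. *)
Fixpoint npow (w : T) (n : nat) : T :=
  match n with 0 => w | S n => op (npow w n) w end.

Lemma npow_add w d i : npow w (S (d + i)) = op (npow w d) (npow w i).
Proof.
  induction i as [|i IH].
  - now rewrite Nat.add_0_r.
  - rewrite Nat.add_succ_r. simpl in *. now rewrite IH, Hassoc.
Qed.

Lemma npow_inj w : Injective (npow w).
Proof.
  apply lt_neq_injective. intros i j Hij E.
  replace j with (S ((j - i - 1) + i)) in E by lia.
  rewrite npow_add in E.
  exact (left_translation_fixpoint_free _ _ (eq_sym E)).
Qed.

Hypothesis Hlwc : left_weakly_cancellative op.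

Lemma right_translation_fixpoint_free z w : op z w <> z.
Proof.
  intros E.
  assert (Hpow : forall n, op z (npow w n) = z).
  { induction n as [|n IH]; simpl; [exact E|]. now rewrite Hassoc, IH. }
  destruct (Hlwc z z) as [L HL].
  destruct (injective_escapes_list _ (npow_inj w) L) as [n Hn].
  exact (Hn (HL _ (Hpow n))).
Qed.

Variable x : nat -> T.

Definition partial_sum (k n : nat) : T :=
  fold_left (fun acc i => op acc (x i)) (seq (S k) n) (x k).

Lemma fold_left_op_assoc l a b :
  fold_left (fun acc i => op acc (x i)) l (op a b) =
  op a (fold_left (fun acc i => op acc (x i)) l b).
Proof.
  revert b; induction l as [|i l IH]; intros b; simpl; [reflexivity|].
  now rewrite <- Hassoc, IH.
Qed.

Lemma partial_sum_extend k i j :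
  i < j -> exists w, partial_sum k j = op (partial_sum k i) w.
Proof.
  intros Hij. unfold partial_sum.
  replace j with (i + S (j - i - 1)) by lia.
  rewrite seq_app, fold_left_app. simpl.
  rewrite fold_left_op_assoc. eexists; reflexivity.
Qed.

Lemma partial_sum_inj k : Injective (partial_sum k).
Proof.
  apply lt_neq_injective. intros i j Hij E.
  destruct (partial_sum_extend k i j Hij) as [w Hw].
  apply (right_translation_fixpoint_free (partial_sum k i) w).
  congruence.
Qed.

Definition solutions (a b : T) : list T :=
  proj1_sig (constructive_indefinite_description _ (Hlwc a b)).

Lemma solutions_spec a b z : op a z = b -> In z (solutions a b).
Proof. exact (proj2_sig (constructive_indefinite_description _ (Hlwc a b)) z). Qed.

Definition fresh_length (k : nat) (L : list T) : nat :=
  proj1_sig (constructive_indefinite_description _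
    (injective_escapes_list _ (partial_sum_inj k) L)).

Lemma fresh_length_spec k L : ~ In (partial_sum k (fresh_length k L)) L.
Proof.
  exact (proj2_sig (constructive_indefinite_description _
    (injective_escapes_list _ (partial_sum_inj k) L))).
Qed.

Definition forbidden (L : list T) : list T :=
  L ++ flat_map (fun a => flat_map (solutions a) L) L.

(* A stage is the start index of the next block together with the list of
   all finite sums of the blocks chosen so far. *)
Definition next_stage (s : nat * list T) : nat * list T :=
  let n := fresh_length (fst s) (forbidden (snd s)) in
  let v := partial_sum (fst s) n in
  (fst s + n + 1, snd s ++ v :: map (fun a => op a v) (snd s)).

Definition stage (m : nat) : nat * list T := Nat.iter m next_stage (0, []).
Definition block_start (m : nat) : nat := fst (stage m).
Definition sums (m : nat) : list T := snd (stage m).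
Definition block_length (m : nat) : nat :=
  fresh_length (block_start m) (forbidden (sums m)).
Definition y (m : nat) : T := partial_sum (block_start m) (block_length m).

Lemma block_start_S m : block_start (S m) = block_start m + block_length m + 1.
Proof. reflexivity. Qed.

Lemma sums_S m : sums (S m) = sums m ++ y m :: map (fun a => op a (y m)) (sums m).
Proof. reflexivity. Qed.

Lemma y_not_forbidden m : ~ In (y m) (forbidden (sums m)).
Proof. apply fresh_length_spec. Qed.

Lemma sums_incl m m' : m <= m' -> incl (sums m) (sums m').
Proof.
  induction 1 as [|m' _ IH]; [apply incl_refl|].
  rewrite sums_S. now apply incl_appl.
Qed.

Lemma fsum_y_in_sums m l v :
  StronglySorted lt l -> Forall (fun t => t < m) l ->
  fsum op y l = Some v -> In v (sums m).
Proof.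
  revert m v; induction l as [|e l IH] using rev_ind; intros m v Hs Hm Hv;
    [discriminate|].
  destruct (StronglySorted_snoc_inv _ _ _ Hs) as [Hs' Hle].
  apply Forall_app in Hm as [_ Hem]. apply Forall_inv in Hem.
  apply (sums_incl (S e) m Hem). rewrite sums_S, in_app_iff. right.
  rewrite fsum_snoc in Hv. injection Hv as <-.
  destruct (fsum op y l) as [a|] eqn:Ha; [right | now left].
  apply (in_map (fun b => op b (y e))), (IH e a Hs' Hle eq_refl).
Qed.

Lemma fsum_y_neq_of_last_lt l1 e1 l2 e2 :
  StronglySorted lt (l1 ++ [e1]) -> StronglySorted lt (l2 ++ [e2]) -> e1 < e2 ->
  fsum op y (l1 ++ [e1]) <> fsum op y (l2 ++ [e2]).
Proof.
  intros Hs1 Hs2 He E.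
  destruct (StronglySorted_snoc_inv _ _ _ Hs2) as [Hs2' Hl2].
  assert (Hl1 : Forall (fun t => t < e2) (l1 ++ [e1])).
  { apply StronglySorted_snoc_inv in Hs1 as [_ Hl1].
    apply Forall_app; split; [|now constructor].
    eapply Forall_impl; [|exact Hl1]. simpl; lia. }
  rewrite (fsum_snoc op y l2 e2) in E.
  pose proof (fsum_y_in_sums e2 _ _ Hs1 Hl1 E) as Hb.
  apply (y_not_forbidden e2). unfold forbidden. rewrite in_app_iff.
  destruct (fsum op y l2) as [a|] eqn:Ha; [right | now left].
  apply in_flat_map. exists a. split; [exact (fsum_y_in_sums e2 l2 a Hs2' Hl2 Ha)|].
  apply in_flat_map. exists (op a (y e2)). split; [exact Hb|].
  now apply solutions_spec.
Qed.

Lemma fsum_y_inj l1 l2 :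
  StronglySorted lt l1 -> StronglySorted lt l2 -> fsum op y l1 = fsum op y l2 -> l1 = l2.
Proof.
  revert l2; induction l1 as [|e1 l1 IH] using rev_ind; intros l2 Hs1 Hs2 E.
  - symmetry. apply (fsum_None op y). now rewrite <- E.
  - induction l2 as [|e2 l2 _] using rev_ind.
    { rewrite fsum_snoc in E; discriminate. }
    destruct (lt_eq_lt_dec e1 e2) as [[He|<-]|He].
    + exfalso. exact (fsum_y_neq_of_last_lt _ _ _ _ Hs1 Hs2 He E).
    + f_equal. apply IH.
      * exact (proj1 (StronglySorted_snoc_inv _ _ _ Hs1)).
      * exact (proj1 (StronglySorted_snoc_inv _ _ _ Hs2)).
      * exact (fsum_snoc_cancel _ _ _ _ E).
    + exfalso. exact (fsum_y_neq_of_last_lt _ _ _ _ Hs2 Hs1 He (eq_sym E)).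
Qed.

Lemma sum_subsystem_y : sum_subsystem op x y.
Proof.
  exists (fun m => seq (block_start m) (S (block_length m))). split; [|split].
  - intros m. split; [discriminate | apply StronglySorted_lt_seq].
  - intros m. rewrite seq_S, last_last, block_start_S. cbn [hd seq]. lia.
  - intros m. reflexivity.
Qed.

Lemma uniqueness_of_finite_sums_y : uniqueness_of_finite_sums op y.
Proof.
  intros l1 l2 [_ Hs1] [_ Hs2] Hneq E.
  exact (Hneq (fsum_y_inj l1 l2 Hs1 Hs2 E)).
Qed.

End Semigroup.

Theorem theorem2p4 (T : Type) (op : T -> T -> T) :
  associative op -> infinite_type T -> no_idempotent op ->
  left_weakly_cancellative op -> right_cancellative op ->
  forall x : nat -> T, exists y : nat -> T,
    sum_subsystem op x y /\ uniqueness_of_finite_sums op y.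
Proof.
  intros Hassoc _ Hnoid Hlwc Hrc x.
  exists (y T op Hassoc Hnoid Hrc Hlwc x).
  split; [apply sum_subsystem_y | apply uniqueness_of_finite_sums_y].
Qed.
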